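(* Let $m>0$, $a_1,a_2\in\mathbb{R}$, $b_0,b_1,b_2\in\mathbb{R}\setminus\{0\}$. Suppose the equation $$\gamma(a_1-\gamma)(a_2-\gamma)J(\gamma)=b_0+b_1\gamma+b_2\gamma^2,\qquad\gamma\in D,$$ has exactly three distinct solutions $\gamma_0,\gamma_1,\gamma_2\in D$. Set $\beta_0=-\gamma_0\gamma_1\gamma_2$, $\beta_1=\gamma_0\gamma_1+\gamma_0\gamma_2+\gamma_1\gamma_2$, $\beta_2=-(\gamma_0+\gamma_1+\gamma_2)$. Then $\beta_0,\beta_1,\beta_2\in\mathbb{R}$; the polynomial $P(M)=M^3+\beta_2M^2+\beta_1M+\beta_0$ has no zeros in $[4m^2,\infty)$; and the functions $\mathfrak h_0,\mathfrak h_1,\mathfrak h_2\in W^{2,2}(\mathbb R)\subset C^1(\mathbb R)$ defined (via Fourier transform, $M=p^2+4m^2$) by $$b_2\hat{\mathfrak h}_2=\Big(\frac{M(M-a_1)(M-a_2)}{P(M)}-1\Big)\hat{\check\rho},\quad b_1\hat{\mathfrak h}_1=-\frac{M\beta_1+\beta_0}{M^2}(\hat{\check\rho}+b_2\hat{\mathfrak h}_2)+\frac{a_1a_2}{M}\hat{\check\rho},\quad b_0\hat{\mathfrak h}_0=-\frac{\beta_0}{M}(\hat{\check\rho}+b_2\hat{\mathfrak h}_2)$$ satisfy $\mathfrak h_0(0)=\mathfrak h_1(0)=\mathfrak h_2(0)=1$.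
   Context: $\rho(M)=\frac{1}{16\pi^2}\sqrt{1-\frac{4m^2}{M}}\frac1M$ for $M\ge4m^2$; $\check\rho(z)=\int_{\mathbb{R}}\rho(p^2+4m^2)|p|e^{\mathrm ipz}dp$; Fourier transform $\hat f(p)=\int e^{-\mathrm ipz}f(z)dz$. $J(z):=\int_{4m^2}^\infty\frac{\rho(M)}{M-z}dM$ for $z\in D:=\{z\in\mathbb{C}:\ \mathrm{Im}\,z\ne0\}\cup\{z\in\mathbb{R}: z<4m^2\}$. *)

From Stdlib Require Import Reals.
From Coquelicot Require Import Coquelicot.
Open Scope R_scope.

Definition rho (m M : R) : R :=
  if Rle_dec (4 * m ^ 2) M then
    / (16 * PI ^ 2) * sqrt (1 - 4 * m ^ 2 / M) * / M
  else 0.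

Definition inD (m : R) (z : C) : Prop :=
  Im z <> 0 \/ (Im z = 0 /\ Re z < 4 * m ^ 2).

Definition J (m : R) (z : C) : C :=
  @RInt_gen C_R_CompleteNormedModule
    (fun M : R => (RtoC (rho m M) / (RtoC M - z))%C)
    (at_point (4 * m ^ 2)) (Rbar_locally p_infty).

(* Fourier transform of rho_check, \hat{\check\rho}(p) = 2 pi rho(p^2+4m^2)|p|
   (with \hat f(p) = \int e^{-ipz} f(z) dz and
   \check\rho(z) = \int rho(p^2+4m^2)|p| e^{ipz} dp) *)
Definition rhocheck_hat (m p : R) : R :=
  2 * PI * (rho m (p ^ 2 + 4 * m ^ 2) * Rabs p).

Definition Pcub (be0 be1 be2 M : R) : R :=
  M ^ 3 + be2 * M ^ 2 + be1 * M + be0.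

Definition h2_hat (m a1 a2 b2 be0 be1 be2 p : R) : R :=
  let M := p ^ 2 + 4 * m ^ 2 in
  / b2 * ((M * (M - a1) * (M - a2) / Pcub be0 be1 be2 M - 1) * rhocheck_hat m p).

Definition h1_hat (m a1 a2 b1 b2 be0 be1 be2 p : R) : R :=
  let M := p ^ 2 + 4 * m ^ 2 in
  / b1 * (- ((M * be1 + be0) / M ^ 2)
            * (rhocheck_hat m p + b2 * h2_hat m a1 a2 b2 be0 be1 be2 p)
          + a1 * a2 / M * rhocheck_hat m p).

Definition h0_hat (m a1 a2 b0 b2 be0 be1 be2 p : R) : R :=
  let M := p ^ 2 + 4 * m ^ 2 in
  / b0 * (- (be0 / M)
            * (rhocheck_hat m p + b2 * h2_hat m a1 a2 b2 be0 be1 be2 p)).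

(* the function h with Fourier transform fh lies in W^{2,2}(R):
   (1+p^2) \hat h(p) is square integrable (Plancherel) *)
Definition in_W22_fourier (fh : R -> R) : Prop :=
  ex_RInt_gen (fun p : R => (1 + p ^ 2) ^ 2 * fh p ^ 2)
    (Rbar_locally m_infty) (Rbar_locally p_infty).

(* the inverse Fourier transform of fh at z has value v:
   h(z) = (1/2pi) \int \hat h(p) e^{ipz} dp = v *)
Definition inv_fourier_at (fh : R -> R) (z : R) (v : C) : Prop :=
  @is_RInt_gen C_R_NormedModule
    (fun p : R => (RtoC (fh p / (2 * PI)) * (cos (p * z), sin (p * z)))%C)
    (Rbar_locally m_infty) (Rbar_locally p_infty) v.

(** The three roots are the only solutions of the dispersion equation in D, and
    J(conj z) = conj (J z) makes the set of solutions closed under conjugation, so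
    conjugation permutes the roots and their symmetric functions beta_i are real. On the
    ray M >= 4 m^2 every factor M - gamma_k of P(M) is bounded below by a multiple of M.

    Each hat h_i equals 2 pi |p| rho(M) N_i(M) / (b_i P(M)) with N_i quadratic. The partial
    fraction expansion N_i / (b_i P) = sum_k w_k / (M - gamma_k) gives
    int rho N_i / (b_i P) dM = sum_k w_k J(gamma_k), and the dispersion equation at the
    roots turns this sum into 1. Substituting M = p^2 + 4 m^2 then yields
    h_i(0) = (1 / 2 pi) int hat h_i = 1, while hat h_i = O(|p|^-3) makes (1 + p^2) hat h_i
    square integrable. *)

From Stdlib Require Import Reals Lra Psatz.
From Coquelicot Require Import Coquelicot.
Open Scope R_scope.

(** * Improper integrals *)

Lemma is_RInt_gen_ext_eq {V : NormedModule R_AbsRing} {Fa Fb : (R -> Prop) -> Prop}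
    {FFa : Filter Fa} {FFb : Filter Fb} (f g : R -> V) (l : V) :
  (forall x, f x = g x) -> is_RInt_gen f Fa Fb l -> is_RInt_gen g Fa Fb l.
Proof.
  intros Hfg. apply is_RInt_gen_ext.
  apply (Filter_prod _ _ _ (fun _ => True) (fun _ => True)); try apply filter_true.
  intros; apply Hfg.
Qed.

Section ImproperIntegrals.

Context {V : CompleteNormedModule R_AbsRing}.

Lemma is_RInt_gen_at_point_of_filterlim (f : R -> V) (a : R) (x : Rbar) (l : V) :
  Rbar_locally x (fun b => ex_RInt f a b) ->
  filterlim (fun b => RInt f a b) (Rbar_locally x) (locally l) ->
  is_RInt_gen f (at_point a) (Rbar_locally x) l.
Proof.
  intros Hex Hlim P HP.
  apply (Filter_prod _ _ _ (fun c => c = a) (fun b => ex_RInt f a b /\ P (RInt f a b))).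
  - reflexivity.
  - apply filter_and; [exact Hex | exact (Hlim P HP)].
  - intros c b -> [Hab HPab]. exists (RInt f a b).
    split; [exact (RInt_correct f a b Hab) | exact HPab].
Qed.

Lemma filterlim_RInt_of_is_RInt_gen (f : R -> V) (a : R) (x : Rbar) (l : V) :
  is_RInt_gen f (at_point a) (Rbar_locally x) l ->
  filterlim (fun b => RInt f a b) (Rbar_locally x) (locally l).
Proof.
  intros H P HP. destruct (H P HP) as [Q S HQ HS HQS].
  unfold filtermap. apply filter_imp with S; [|exact HS].
  intros y Hy. destruct (HQS a y HQ Hy) as [v [Hv Pv]].
  simpl in Hv. now rewrite (is_RInt_unique _ _ _ _ Hv).
Qed.

Lemma norm_RInt_le_inv_square (f : R -> V) (K N b : R) :
  0 < N <= b -> ex_RInt f N b ->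
  (forall x, N <= x <= b -> norm (f x) <= K / x ^ 2) ->
  norm (RInt f N b) <= K / N.
Proof.
  intros HNb Hex Hf.
  assert (HK : 0 <= K).
  { assert (H := Hf N (conj (Rle_refl N) (proj2 HNb))).
    assert (0 <= norm (f N)) by apply norm_ge_0.
    assert (0 < N ^ 2) by (apply pow_lt; lra).
    apply Rmult_le_reg_r with (/ N ^ 2); [apply Rinv_0_lt_compat; lra | unfold Rdiv in H; lra]. }
  assert (Hprim : is_RInt (fun x => K / x ^ 2) N b (K / N - K / b)).
  { replace (K / N - K / b) with (minus (- K / b) (- K / N))
      by (unfold minus, plus, opp; simpl; field; lra).
    apply (is_RInt_derive (V := R_CompleteNormedModule) (fun x => - K / x));
      intros x Hx; rewrite Rmin_left, Rmax_right in Hx by lra.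
    - auto_derive; [lra | field; lra].
    - apply (ex_derive_continuous (V := R_NormedModule)). auto_derive. apply Rgt_not_eq. nra. }
  apply Rle_trans with (K / N - K / b).
  - exact (norm_RInt_le f _ N b _ _ (proj2 HNb) Hf (RInt_correct f N b Hex) Hprim).
  - assert (0 <= K / b) by (apply Rdiv_le_0_compat; lra). lra.
Qed.

Lemma ex_RInt_gen_inv_square_bound (f : R -> V) (a K : R) :
  0 < a -> (forall b, a <= b -> ex_RInt f a b) ->
  (forall x, a <= x -> norm (f x) <= K / x ^ 2) ->
  ex_RInt_gen f (at_point a) (Rbar_locally p_infty).
Proof.
  intros Ha Hex Hf.
  assert (Htail : forall N b, a <= N <= b -> norm (RInt f N b) <= Rabs K / N).
  { intros N b HN. apply norm_RInt_le_inv_square; [lra | |].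
    - apply (ex_RInt_Chasles_2 f a); [lra | apply Hex; lra].
    - intros x Hx. apply Rle_trans with (K / x ^ 2); [apply Hf; lra |].
      apply Rmult_le_compat_r; [| apply Rle_abs].
      apply Rlt_le, Rinv_0_lt_compat, pow_lt. lra. }
  assert (Hshift : forall N b, a <= N <= b ->
    minus (RInt f a b) (RInt f a N) = RInt f N b).
  { intros N b HN.
    rewrite <- (RInt_Chasles f a N b);
      [| apply Hex; lra | apply (ex_RInt_Chasles_2 f a); [lra | apply Hex; lra]].
    unfold minus. rewrite plus_comm, plus_assoc, plus_opp_l, plus_zero_l. reflexivity. }
  destruct (proj1 (filterlim_locally_cauchy (F := Rbar_locally p_infty) (fun b => RInt f a b)))
    as [l Hl].
  - intros eps. pose proof (cond_pos eps) as Heps.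
    set (N := a + 2 * Rabs K / eps).
    assert (HaN : a <= N).
    { assert (0 <= 2 * Rabs K / eps) by (apply Rdiv_le_0_compat; [pose proof (Rabs_pos K) |]; lra).
      unfold N. lra. }
    assert (HtailN : Rabs K / N < eps / 2).
    { apply Rmult_lt_reg_r with N; [lra |].
      replace (Rabs K / N * N) with (Rabs K) by (field; lra).
      replace (eps / 2 * N) with (a * eps / 2 + Rabs K) by (unfold N; field; lra).
      pose proof (Rmult_lt_0_compat a eps Ha Heps). lra. }
    assert (Hsmall : forall b, N <= b -> ball (RInt f a N) (eps / 2) (RInt f a b)).
    { intros b Hb. apply (norm_compat1 (V := V)). rewrite Hshift by lra.
      eapply Rle_lt_trans; [apply Htail; lra | exact HtailN]. }
    exists (fun b => N <= b). split; [exists N; intros; lra |].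
    intros u v Hu Hv. replace (pos eps) with (eps / 2 + eps / 2) by field.
    apply ball_triangle with (RInt f a N); [apply ball_sym |]; auto.
  - exists l. apply (is_RInt_gen_at_point_of_filterlim f a p_infty);
      [exists a; intros; apply Hex; lra | exact Hl].
Qed.

Lemma RInt_even_opp_bound (f : R -> V) (b : R) :
  (forall x, f (- x) = f x) -> (forall b, ex_RInt f 0 b) ->
  RInt f 0 (- b) = opp (RInt f 0 b).
Proof.
  intros Hev Hex.
  rewrite <- (RInt_opp f 0 b (Hex b)).
  symmetry. apply (is_RInt_unique (V := V)).
  apply (is_RInt_ext (V := V) (fun y => opp (f (- y)))); [intros x _; now rewrite Hev |].
  apply (is_RInt_comp_opp (V := V)). rewrite Ropp_0. apply (RInt_correct (V := V)), Hex.
Qed.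

Lemma is_RInt_gen_even (f : R -> V) (l : V) :
  (forall x, f (- x) = f x) -> (forall b, ex_RInt f 0 b) ->
  is_RInt_gen f (at_point 0) (Rbar_locally p_infty) l ->
  is_RInt_gen f (Rbar_locally m_infty) (Rbar_locally p_infty) (plus l l).
Proof.
  intros Hev Hex H.
  assert (Hneg : is_RInt_gen f (at_point 0) (Rbar_locally m_infty) (opp l)).
  { apply (is_RInt_gen_at_point_of_filterlim f 0 m_infty);
      [exists 0; intros; apply Hex |].
    apply (filterlim_ext (fun b => opp (RInt f 0 (- b)))).
    { intros b. rewrite (RInt_even_opp_bound f b Hev Hex). apply opp_opp. }
    apply filterlim_comp with (locally l); [| apply (filterlim_opp (V := V))].
    apply filterlim_comp with (Rbar_locally p_infty); [apply (filterlim_Rbar_opp m_infty) |].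
    exact (filterlim_RInt_of_is_RInt_gen f 0 p_infty l H). }
  apply (is_RInt_gen_Chasles (V := V) (Fa := Rbar_locally m_infty) (Fc := Rbar_locally p_infty)
    f 0); [| exact H].
  rewrite <- (opp_opp l) at 1.
  exact (is_RInt_gen_swap (V := V) f _ Hneg).
Qed.

Lemma ex_RInt_gen_even_inv_square (f : R -> V) (K : R) :
  (forall x, continuous f x) -> (forall x, f (- x) = f x) ->
  (forall x, 1 <= x -> norm (f x) <= K / x ^ 2) ->
  ex_RInt_gen f (Rbar_locally m_infty) (Rbar_locally p_infty).
Proof.
  intros Hc Hev Hf.
  assert (Hex : forall a b, ex_RInt f a b) by (intros; apply ex_RInt_continuous; auto).
  destruct (ex_RInt_gen_inv_square_bound f 1 K Rlt_0_1 (fun b _ => Hex 1 b) Hf) as [l Hl].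
  exists (plus (plus (RInt f 0 1) l) (plus (RInt f 0 1) l)).
  apply (is_RInt_gen_even f _ Hev (Hex 0)).
  apply (is_RInt_gen_Chasles (V := V) (Fa := at_point 0) (Fc := Rbar_locally p_infty) f 1);
    [| exact Hl].
  apply is_RInt_gen_at_point, (RInt_correct (V := V)), Hex.
Qed.

End ImproperIntegrals.

Section LinearImage.

Context {U W : NormedModule R_AbsRing} (l : U -> W) (Hl : is_linear l).

Lemma Riemann_sum_linear (f : R -> U) (ptd : SF_seq) :
  Riemann_sum (fun x => l (f x)) ptd = l (Riemann_sum f ptd).
Proof.
  induction ptd as [x0 | h s IH] using SF_cons_ind.
  - symmetry. apply (linear_zero l Hl).
  - rewrite !Riemann_sum_cons, IH, (linear_plus l Hl), (linear_scal l Hl). reflexivity.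
Qed.

Lemma is_RInt_linear (f : R -> U) (a b : R) (I : U) :
  is_RInt f a b I -> is_RInt (fun x => l (f x)) a b (l I).
Proof.
  intros H. unfold is_RInt.
  apply (filterlim_ext (fun ptd => l (scal (sign (b - a)) (Riemann_sum f ptd)))).
  { intros ptd. now rewrite (linear_scal l Hl), Riemann_sum_linear. }
  apply filterlim_comp with (locally I); [exact H | exact (linear_cont l I Hl)].
Qed.

Lemma is_RInt_gen_linear {Fa Fb : (R -> Prop) -> Prop} {FFa : Filter Fa} {FFb : Filter Fb}
    (f : R -> U) (I : U) :
  is_RInt_gen f Fa Fb I -> is_RInt_gen (fun x => l (f x)) Fa Fb (l I).
Proof.
  intros H P HP.
  specialize (H _ (linear_cont l I Hl P HP)). unfold filtermapi in *.
  apply filter_imp with (2 := H).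
  intros ab [v [Hv HPv]]. exists (l v). split; [exact (is_RInt_linear f _ _ v Hv) | exact HPv].
Qed.

End LinearImage.

Lemma is_linear_Cmult (c : C) :
  is_linear (U := C_R_NormedModule) (V := C_R_NormedModule) (fun z => c * z)%C.
Proof.
  split.
  - intros x y. apply Cmult_plus_distr_l.
  - intros k [x1 x2]. destruct c as [c1 c2]. apply injective_projections; cbn; ring.
  - exists (Cmod c + 1). split; [pose proof (Cmod_ge_0 c); lra |].
    intros x. rewrite <- !Cmod_norm, Cmod_mult.
    pose proof (Cmod_ge_0 x). nra.
Qed.

Lemma is_linear_Cconj : is_linear (U := C_R_NormedModule) (V := C_R_NormedModule) Cconj.
Proof.
  split.
  - intros x y. apply Cplus_conj.
  - intros k [x1 x2]. apply injective_projections; cbn; ring.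
  - exists 1. split; [lra |]. intros x. rewrite <- !Cmod_norm, Cmod_conj. lra.
Qed.

Lemma is_linear_RtoC : is_linear (U := R_NormedModule) (V := C_R_NormedModule) RtoC.
Proof.
  split.
  - intros x y. apply RtoC_plus.
  - intros k x. apply injective_projections; cbn; ring.
  - exists 1. split; [lra |]. intros x.
    rewrite <- Cmod_norm, Cmod_R. change (norm x) with (Rabs x). lra.
Qed.

Lemma filterlim_sq_plus_p_infty (c : R) :
  filterlim (fun p => p ^ 2 + c) (Rbar_locally p_infty) (Rbar_locally p_infty).
Proof.
  intros P [N HN]. exists (Rabs N + Rabs c + 1). intros p Hp. apply HN.
  pose proof (Rle_abs N). pose proof (Rle_abs (- c)). rewrite Rabs_Ropp in *.
  pose proof (Rabs_pos N). pose proof (Rabs_pos c). nra.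
Qed.

Section RadialSubstitution.

Variables (F : R -> R) (c : R).
Hypothesis HF : forall M, c <= M -> continuous F M.

Lemma continuous_radial (p : R) : continuous (fun p => Rabs p * F (p ^ 2 + c)) p.
Proof.
  apply (continuous_mult (K := R_AbsRing)); [apply continuous_Rabs |].
  apply (continuous_comp (fun p => p ^ 2 + c) F).
  - apply (ex_derive_continuous (V := R_NormedModule)). auto_derive. auto.
  - apply HF. pose proof (pow2_ge_0 p). lra.
Qed.

Lemma RInt_radial (b : R) : 0 <= b ->
  RInt (fun p => Rabs p * F (p ^ 2 + c)) 0 b = RInt F c (b ^ 2 + c) / 2.
Proof.
  intros Hb.
  assert (Hsub := is_RInt_comp (V := R_CompleteNormedModule) F
    (fun p => p ^ 2 + c) (fun p => 2 * p) 0 b).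
  cbv beta in Hsub. replace (0 ^ 2 + c) with c in Hsub by ring.
  apply (is_RInt_unique (V := R_CompleteNormedModule)).
  apply (is_RInt_ext (V := R_NormedModule) (fun p => scal (/ 2) (scal (2 * p) (F (p ^ 2 + c))))).
  { intros x Hx. rewrite Rmin_left, Rmax_right in Hx by lra.
    rewrite Rabs_pos_eq by lra. cbn. field. }
  replace (RInt F c (b ^ 2 + c) / 2) with (scal (/ 2) (RInt F c (b ^ 2 + c)))
    by (cbn; field).
  apply (is_RInt_scal (V := R_NormedModule)), Hsub.
  - intros x _. apply HF. pose proof (pow2_ge_0 x). lra.
  - intros x _. split; [auto_derive; [auto | ring] |].
    apply (ex_derive_continuous (V := R_NormedModule)). auto_derive. auto.
Qed.

Lemma is_RInt_gen_radial (L : R) :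
  is_RInt_gen F (at_point c) (Rbar_locally p_infty) L ->
  is_RInt_gen (fun p => Rabs p * F (p ^ 2 + c))
    (Rbar_locally m_infty) (Rbar_locally p_infty) L.
Proof.
  intros HL.
  replace L with (plus (L / 2) (L / 2)) by (unfold plus; simpl; field).
  apply (is_RInt_gen_even (V := R_CompleteNormedModule)).
  - intros x. rewrite Rabs_Ropp. now replace ((- x) ^ 2) with (x ^ 2) by ring.
  - intros b. apply ex_RInt_continuous. intros; apply continuous_radial.
  - apply (is_RInt_gen_at_point_of_filterlim (V := R_CompleteNormedModule) _ 0 p_infty).
    + exists 0. intros b _. apply ex_RInt_continuous. intros; apply continuous_radial.
    + apply (filterlim_ext_loc (fun b => scal (V := R_NormedModule) (RInt F c (b ^ 2 + c)) (/ 2))).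
      { exists 0. intros b Hb. rewrite RInt_radial by lra. reflexivity. }
      apply (filterlim_comp _ _ _ (fun b => RInt F c (b ^ 2 + c)) (fun z => scal z (/ 2)) _
        (locally L)).
      * apply (filterlim_comp _ _ _ (fun b => b ^ 2 + c) (fun M => RInt F c M) _
          (Rbar_locally p_infty));
          [apply filterlim_sq_plus_p_infty |].
        exact (filterlim_RInt_of_is_RInt_gen (V := R_CompleteNormedModule) F c p_infty L HL).
      * exact (filterlim_scal_l (K := R_AbsRing) (V := R_NormedModule) L (/ 2)).
Qed.

End RadialSubstitution.

Lemma inv_fourier_at_0_radial (fh F : R -> R) (c L : R) :
  (forall M, c <= M -> continuous F M) ->
  (forall p, fh p = 2 * PI * (Rabs p * F (p ^ 2 + c))) ->
  is_RInt_gen F (at_point c) (Rbar_locally p_infty) L ->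
  inv_fourier_at fh 0 (RtoC L).
Proof.
  intros HF Hfh HL. unfold inv_fourier_at.
  apply (is_RInt_gen_ext_eq (V := C_R_NormedModule) (fun p => RtoC (Rabs p * F (p ^ 2 + c)))).
  - intros p. rewrite Hfh, Rmult_0_r, cos_0, sin_0. pose proof PI_RGT_0.
    apply injective_projections; simpl; field; lra.
  - exact (is_RInt_gen_linear RtoC is_linear_RtoC _ _ (is_RInt_gen_radial F c HF L HL)).
Qed.

Lemma W22_integrand_decay (c A p h : R) : 0 < c -> 1 <= p ->
  Rabs h <= A * p / (p ^ 2 + c) ^ 2 ->
  (1 + p ^ 2) ^ 2 * h ^ 2 <= (A * (1 + / c)) ^ 2 / p ^ 2.
Proof.
  intros Hc Hp Hh.
  set (M := p ^ 2 + c) in *. set (k := 1 + / c).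
  assert (Hp2 : 1 <= p ^ 2) by nra.
  assert (HM : p ^ 2 <= M) by (unfold M; lra).
  assert (Hk : 1 + p ^ 2 <= k * M).
  { unfold k, M. assert (p ^ 2 / c * c = p ^ 2) by (field; lra).
    assert (0 <= p ^ 2 / c) by (apply Rdiv_le_0_compat; lra).
    replace ((1 + / c) * (p ^ 2 + c)) with (p ^ 2 + c + p ^ 2 / c + 1) by (field; lra). lra. }
  assert (Hh2 : h ^ 2 <= (A * p / M ^ 2) ^ 2).
  { rewrite <- (pow2_abs h). apply pow_incr. split; [apply Rabs_pos | exact Hh]. }
  (* [(1 + p^2)^2 h^2 <= k^2 A^2 p^2 / M^2], and [p^4 <= M^2] *)
  apply Rle_trans with ((k * M) ^ 2 * (A * p / M ^ 2) ^ 2).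
  - apply Rmult_le_compat; try apply pow2_ge_0; [| exact Hh2]. apply pow_incr. nra.
  - assert (HM0 : 0 < M) by lra.
    replace ((k * M) ^ 2 * (A * p / M ^ 2) ^ 2) with ((A * k) ^ 2 * (p ^ 2 / M ^ 2))
      by (field; lra).
    unfold Rdiv. apply Rmult_le_compat_l; [apply pow2_ge_0 |].
    apply Rmult_le_reg_r with (M ^ 2 * p ^ 2); [nra |].
    replace (p ^ 2 * / M ^ 2 * (M ^ 2 * p ^ 2)) with ((p ^ 2) ^ 2) by (field; lra).
    replace (/ p ^ 2 * (M ^ 2 * p ^ 2)) with (M ^ 2) by (field; nra).
    apply pow_incr. nra.
Qed.

Lemma in_W22_fourier_of_decay (fh : R -> R) (K : R) :
  (forall p, continuous fh p) -> (forall p, fh (- p) = fh p) ->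
  (forall p, 1 <= p -> (1 + p ^ 2) ^ 2 * fh p ^ 2 <= K / p ^ 2) ->
  in_W22_fourier fh.
Proof.
  intros Hc Hev Hdecay. unfold in_W22_fourier.
  apply (ex_RInt_gen_even_inv_square (V := R_CompleteNormedModule) _ K).
  - intros p. apply (continuous_mult (K := R_AbsRing)).
    + apply (ex_derive_continuous (V := R_NormedModule)). auto_derive. auto.
    + apply (continuous_comp fh (fun y => y ^ 2)); [apply Hc |].
      apply (ex_derive_continuous (V := R_NormedModule)). auto_derive. auto.
  - intros p. rewrite Hev. replace ((- p) ^ 2) with (p ^ 2) by ring. reflexivity.
  - intros p Hp. change (norm ?z) with (Rabs z).
    rewrite Rabs_pos_eq by (apply Rmult_le_pos; apply pow2_ge_0). now apply Hdecay.
Qed.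

(** * The domain D, the density rho and the function J *)

Lemma inD_Cmod_sub_ge_const (m : R) (g : C) : inD m g ->
  exists delta, 0 < delta /\ forall M, 4 * m ^ 2 <= M -> delta <= Cmod (RtoC M - g).
Proof.
  destruct g as [x y]. unfold inD; simpl. intros Hg.
  assert (Hcomp : forall M, Rmax (Rabs (M - x)) (Rabs y) <= Cmod (RtoC M - (x, y))).
  { intros M. rewrite <- (Rabs_Ropp y).
    replace (M - x) with (fst (RtoC M - (x, y))%C) by (simpl; ring).
    replace (- y) with (snd (RtoC M - (x, y))%C) by (simpl; ring).
    apply Rmax_Cmod. }
  destruct Hg as [Hy | [_ Hx]].
  - exists (Rabs y). split; [now apply Rabs_pos_lt |].
    intros M _. eapply Rle_trans; [apply Rmax_r | apply Hcomp].
  - exists (4 * m ^ 2 - x). split; [lra |].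
    intros M HM. eapply Rle_trans; [| apply Hcomp].
    eapply Rle_trans; [| apply Rmax_l]. eapply Rle_trans; [| apply Rle_abs]. lra.
Qed.

Lemma Cmod_sub_ge_proportional (g : C) (delta M : R) :
  0 < delta -> delta <= Cmod (RtoC M - g) ->
  delta / (delta + Cmod g) * M <= Cmod (RtoC M - g).
Proof.
  (* [(delta + |g|) |M - g| >= delta |M - g| + delta |g| >= delta M] *)
  intros Hd HD.
  assert (HM : M <= Cmod (RtoC M - g) + Cmod g).
  { eapply Rle_trans; [apply Rle_abs |]. rewrite <- Cmod_R.
    replace (RtoC M) with (RtoC M - g + g)%C at 1 by ring. apply Cmod_triangle. }
  pose proof (Cmod_ge_0 g).
  apply Rmult_le_reg_l with (delta + Cmod g); [lra |].
  replace ((delta + Cmod g) * (delta / (delta + Cmod g) * M)) with (delta * M) by (field; lra).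
  nra.
Qed.

Lemma inD_Cmod_sub_ge_linear (m : R) (g : C) : inD m g ->
  exists d, 0 < d /\ forall M, 4 * m ^ 2 <= M -> d * M <= Cmod (RtoC M - g).
Proof.
  intros Hg. destruct (inD_Cmod_sub_ge_const m g Hg) as [delta [Hd Hdist]].
  exists (delta / (delta + Cmod g)). split.
  - pose proof (Cmod_ge_0 g). apply Rdiv_lt_0_compat; lra.
  - intros M HM. apply Cmod_sub_ge_proportional; auto.
Qed.

Lemma four_m2_pos (m : R) : 0 < m -> 0 < 4 * m ^ 2.
Proof. intros Hm. pose proof (pow_lt m 2 Hm). lra. Qed.

Lemma four_m2_le_shifted (m p : R) : 4 * m ^ 2 <= p ^ 2 + 4 * m ^ 2.
Proof. pose proof (pow2_ge_0 p). lra. Qed.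

Lemma inD_sub_neq_0 (m : R) (g : C) (M : R) : 0 < m -> inD m g -> 4 * m ^ 2 <= M ->
  (RtoC M - g)%C <> 0%C.
Proof.
  intros Hm Hg HM. destruct (inD_Cmod_sub_ge_linear m g Hg) as [d [Hd Hsep]].
  apply Cmod_gt_0. pose proof (four_m2_pos m Hm).
  pose proof (Hsep M HM). nra.
Qed.

Lemma inD_conj (m : R) (g : C) : inD m g -> inD m (Cconj g).
Proof.
  destruct g as [x y]. unfold inD, Cconj; simpl. intros [H | [H1 H2]]; [left | right]; lra.
Qed.

Lemma rho_eq (m M : R) : 0 < M -> rho m M = / (16 * PI ^ 2) * sqrt (1 - 4 * m ^ 2 / M) * / M.
Proof.
  intros HM. unfold rho. destruct (Rle_dec (4 * m ^ 2) M) as [_ | Hlt]; [reflexivity |].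
  (* below the threshold the square root vanishes *)
  rewrite sqrt_neg_0; [ring |].
  assert (4 * m ^ 2 / M * M = 4 * m ^ 2) by (field; lra).
  assert (1 <= 4 * m ^ 2 / M) by nra. lra.
Qed.

Lemma rho_bounds (m M : R) : 0 < M -> 0 <= rho m M <= / (16 * PI ^ 2) / M.
Proof.
  intros HM. rewrite rho_eq by exact HM.
  assert (Hc : 0 < / (16 * PI ^ 2)) by (apply Rinv_0_lt_compat; pose proof PI_RGT_0; nra).
  assert (HiM : 0 < / M) by (apply Rinv_0_lt_compat; lra).
  assert (Hs : sqrt (1 - 4 * m ^ 2 / M) <= 1).
  { rewrite <- sqrt_1 at 2. apply sqrt_le_1_alt.
    pose proof (pow2_ge_0 m). assert (0 <= 4 * m ^ 2 / M) by (apply Rdiv_le_0_compat; lra). lra. }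
  pose proof (sqrt_pos (1 - 4 * m ^ 2 / M)). split.
  - apply Rmult_le_pos; [apply Rmult_le_pos |]; lra.
  - unfold Rdiv. rewrite Rmult_assoc, (Rmult_comm (sqrt _)), <- Rmult_assoc.
    rewrite <- (Rmult_1_r (/ (16 * PI ^ 2) * / M)) at 2.
    apply Rmult_le_compat_l; [apply Rmult_le_pos |]; lra.
Qed.

Lemma continuous_rho (m M : R) : 0 < M -> continuous (rho m) M.
Proof.
  intros HM.
  apply continuous_ext_loc with (fun M => / (16 * PI ^ 2) * sqrt (1 - 4 * m ^ 2 / M) * / M).
  - exists (mkposreal _ HM). intros y Hy. symmetry. apply rho_eq.
    apply Rabs_lt_between' in Hy. simpl in Hy. lra.
  - apply (continuous_mult (K := R_AbsRing)); [apply (continuous_mult (K := R_AbsRing)) |].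
    + apply continuous_const.
    + apply continuous_sqrt_comp.
      apply (ex_derive_continuous (V := R_NormedModule)). auto_derive. lra.
    + apply (ex_derive_continuous (V := R_NormedModule)). auto_derive. lra.
Qed.

Definition J_integrand (m : R) (g : C) (M : R) : C := (RtoC (rho m M) / (RtoC M - g))%C.

Lemma J_integrand_eq (m x y M : R) :
  J_integrand m (x, y) M =
  (rho m M * (M - x) / ((M - x) ^ 2 + y ^ 2), rho m M * y / ((M - x) ^ 2 + y ^ 2)).
Proof.
  unfold J_integrand, Cdiv, Cmult, Cinv, Cminus, Cplus, Copp, RtoC; simpl.
  replace ((M + - x) * ((M + - x) * 1) + (0 + - y) * ((0 + - y) * 1))
    with ((M - x) * ((M - x) * 1) + y * (y * 1)) by ring.
  apply injective_projections; simpl; unfold Rdiv; ring.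
Qed.

Lemma inD_den_pos (m x y M : R) : inD m (x, y) -> 4 * m ^ 2 <= M -> 0 < (M - x) ^ 2 + y ^ 2.
Proof.
  unfold inD; simpl. intros [Hy | [-> Hx]] HM.
  - pose proof (pow2_ge_0 (M - x)). pose proof (Rsqr_pos_lt y Hy). unfold Rsqr in *. nra.
  - assert (0 < M - x) by lra. nra.
Qed.

Lemma ex_RInt_J_integrand (m : R) (g : C) (b : R) : 0 < m -> inD m g -> 4 * m ^ 2 <= b ->
  ex_RInt (V := C_R_CompleteNormedModule) (J_integrand m g) (4 * m ^ 2) b.
Proof.
  intros Hm Hg Hb. pose proof (four_m2_pos m Hm).
  destruct g as [x y].
  apply (ex_RInt_ext (V := C_R_NormedModule) (fun M =>
    (rho m M * (M - x) / ((M - x) ^ 2 + y ^ 2), rho m M * y / ((M - x) ^ 2 + y ^ 2)))).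
  { intros M _. symmetry. apply J_integrand_eq. }
  apply (ex_RInt_fct_extend_pair (U := R_NormedModule) (V := R_NormedModule)); simpl;
    apply (ex_RInt_continuous (V := R_CompleteNormedModule));
    intros M HM; rewrite Rmin_left, Rmax_right in HM by lra;
    pose proof (inD_den_pos m x y M Hg (proj1 HM));
    apply (continuous_mult (K := R_AbsRing)).
  all: first
    [ apply (continuous_mult (K := R_AbsRing)); [apply continuous_rho; lra |];
      apply (ex_derive_continuous (V := R_NormedModule)); auto_derive; auto
    | apply (ex_derive_continuous (V := R_NormedModule)); auto_derive;
      apply Rgt_not_eq; simpl in *; lra ].
Qed.

Lemma J_integrand_bound (m : R) (g : C) : 0 < m -> inD m g ->
  exists K, forall M, 4 * m ^ 2 <= M -> Cmod (J_integrand m g M) <= K / M ^ 2.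
Proof.
  intros Hm Hg. destruct (inD_Cmod_sub_ge_linear m g Hg) as [d [Hd Hsep]].
  exists (/ (16 * PI ^ 2) / d). intros M HM.
  pose proof (four_m2_pos m Hm). specialize (Hsep M HM).
  assert (HdM : 0 < d * M) by nra.
  destruct (rho_bounds m M ltac:(lra)) as [Hr0 Hr1].
  unfold J_integrand. rewrite Cmod_div, Cmod_R, Rabs_pos_eq by (auto; apply Cmod_gt_0; lra).
  apply Rle_trans with ((/ (16 * PI ^ 2) / M) / (d * M)).
  - unfold Rdiv. apply Rmult_le_compat; auto.
    + apply Rlt_le, Rinv_0_lt_compat. lra.
    + apply Rinv_le_contravar; lra.
  - right. field. pose proof PI_RGT_0. repeat split; lra.
Qed.

Lemma is_RInt_gen_J (m : R) (g : C) : 0 < m -> inD m g ->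
  is_RInt_gen (V := C_R_NormedModule) (J_integrand m g)
    (at_point (4 * m ^ 2)) (Rbar_locally p_infty) (J m g).
Proof.
  intros Hm Hg. destruct (J_integrand_bound m g Hm Hg) as [K HK].
  apply (RInt_gen_correct (V := C_R_CompleteNormedModule)).
  apply (ex_RInt_gen_inv_square_bound (V := C_R_CompleteNormedModule) _ _ K (four_m2_pos m Hm)).
  - intros b Hb. now apply ex_RInt_J_integrand.
  - intros M HM. rewrite <- Cmod_norm. now apply HK.
Qed.

Lemma J_integrand_conj (m : R) (g : C) (M : R) :
  J_integrand m (Cconj g) M = Cconj (J_integrand m g M).
Proof.
  destruct g as [x y]. change (Cconj (x, y)) with (x, - y).
  rewrite !J_integrand_eq. replace ((- y) ^ 2) with (y ^ 2) by ring.
  unfold Cconj; simpl.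
  apply injective_projections; simpl; [| unfold Rdiv]; ring.
Qed.

Lemma J_conj (m : R) (g : C) : 0 < m -> inD m g -> J m (Cconj g) = Cconj (J m g).
Proof.
  intros Hm Hg.
  assert (H := is_RInt_gen_linear Cconj is_linear_Cconj _ _ (is_RInt_gen_J m g Hm Hg)).
  assert (H' : is_RInt_gen (V := C_R_NormedModule) (J_integrand m (Cconj g))
     (at_point (4 * m ^ 2)) (Rbar_locally p_infty) (Cconj (J m g))).
  { apply (is_RInt_gen_ext_eq (V := C_R_NormedModule) (fun M => Cconj (J_integrand m g M)));
      [| exact H].
    intros M. symmetry. apply J_integrand_conj. }
  exact (is_RInt_gen_unique (V := C_R_CompleteNormedModule) _ _ H').
Qed.

(** * Partial fractions over the three roots *)

Lemma Cminus_neq_0 (x y : C) : x <> y -> (x - y)%C <> 0%C.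
Proof. intros Hxy E. apply Hxy. replace x with (x - y + y)%C by ring. rewrite E. ring. Qed.

Lemma RtoC_neq_0 (b : R) : b <> 0 -> RtoC b <> 0%C.
Proof. intros Hb E. apply Hb. exact (f_equal fst E). Qed.

Definition vieta (be0 be1 be2 : R) (g0 g1 g2 : C) : Prop :=
  RtoC be0 = (- (g0 * g1 * g2))%C /\
  RtoC be1 = (g0 * g1 + g0 * g2 + g1 * g2)%C /\
  RtoC be2 = (- (g0 + g1 + g2))%C.

Definition ratfun (n2 n1 n0 b be0 be1 be2 M : R) : R :=
  (n2 * M ^ 2 + n1 * M + n0) / (b * Pcub be0 be1 be2 M).

Definition quadC (n2 n1 n0 : R) (z : C) : C := (RtoC n2 * z * z + RtoC n1 * z + RtoC n0)%C.

Definition residue (n2 n1 n0 b : R) (g0 g1 g2 : C) : C :=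
  (quadC n2 n1 n0 g0 / (RtoC b * ((g0 - g1) * (g0 - g2))))%C.

Definition residue_sum (n2 n1 n0 b : R) (g0 g1 g2 J0 J1 J2 : C) : C :=
  (residue n2 n1 n0 b g0 g1 g2 * J0 + residue n2 n1 n0 b g1 g0 g2 * J1
   + residue n2 n1 n0 b g2 g0 g1 * J2)%C.

Definition dispersion_rel (a1 a2 b0 b1 b2 : R) (g Jg : C) : Prop :=
  (g * (RtoC a1 - g) * (RtoC a2 - g) * Jg = RtoC b0 + RtoC b1 * g + RtoC b2 * g * g)%C.

Lemma dispersion_rel_neq_0 (a1 a2 b0 b1 b2 : R) (g Jg : C) : b0 <> 0 ->
  dispersion_rel a1 a2 b0 b1 b2 g Jg -> g <> 0%C.
Proof.
  unfold dispersion_rel. intros Hb0 E ->. apply (RtoC_neq_0 b0 Hb0).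
  transitivity (RtoC b0 + RtoC b1 * 0 + RtoC b2 * 0 * 0)%C; [ring |]. rewrite <- E. ring.
Qed.

Lemma residue_sum_eq (n2 n1 n0 b : R) (g0 g1 g2 J0 J1 J2 R0 R1 R2 : C) :
  (quadC n2 n1 n0 g0 * J0 = R0)%C -> (quadC n2 n1 n0 g1 * J1 = R1)%C ->
  (quadC n2 n1 n0 g2 * J2 = R2)%C ->
  residue_sum n2 n1 n0 b g0 g1 g2 J0 J1 J2 =
  (R0 / (RtoC b * ((g0 - g1) * (g0 - g2))) + R1 / (RtoC b * ((g1 - g0) * (g1 - g2)))
   + R2 / (RtoC b * ((g2 - g0) * (g2 - g1))))%C.
Proof. intros <- <- <-. unfold residue_sum, residue, Cdiv. ring. Qed.

Ltac push_RtoC :=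
  repeat first [rewrite RtoC_minus | rewrite RtoC_opp | rewrite RtoC_plus | rewrite RtoC_mult].

Section Cubic.

Variables (be0 be1 be2 : R) (g0 g1 g2 : C).
Hypothesis Hvieta : vieta be0 be1 be2 g0 g1 g2.

Lemma Pcub_factor (M : R) :
  RtoC (Pcub be0 be1 be2 M) = ((RtoC M - g0) * (RtoC M - g1) * (RtoC M - g2))%C.
Proof.
  destruct Hvieta as [H0 [H1 H2]]. unfold Pcub.
  replace (M ^ 3 + be2 * M ^ 2 + be1 * M + be0)
    with (M * M * M + be2 * (M * M) + be1 * M + be0) by ring.
  rewrite !RtoC_plus, !RtoC_mult, H0, H1, H2. ring.
Qed.

Hypotheses (N01 : g0 <> g1) (N02 : g0 <> g2) (N12 : g1 <> g2).

Let E01 : (g0 - g1)%C <> 0%C := Cminus_neq_0 _ _ N01.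
Let E02 : (g0 - g2)%C <> 0%C := Cminus_neq_0 _ _ N02.
Let E12 : (g1 - g2)%C <> 0%C := Cminus_neq_0 _ _ N12.
Let E10 : (g1 - g0)%C <> 0%C := Cminus_neq_0 _ _ (not_eq_sym N01).
Let E20 : (g2 - g0)%C <> 0%C := Cminus_neq_0 _ _ (not_eq_sym N02).
Let E21 : (g2 - g1)%C <> 0%C := Cminus_neq_0 _ _ (not_eq_sym N12).

Lemma ratfun_partial_fractions (n2 n1 n0 b M : R) : b <> 0 ->
  (RtoC M - g0)%C <> 0%C -> (RtoC M - g1)%C <> 0%C -> (RtoC M - g2)%C <> 0%C ->
  RtoC (ratfun n2 n1 n0 b be0 be1 be2 M) =
  (residue n2 n1 n0 b g0 g1 g2 / (RtoC M - g0) + residue n2 n1 n0 b g1 g0 g2 / (RtoC M - g1)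
   + residue n2 n1 n0 b g2 g0 g1 / (RtoC M - g2))%C.
Proof.
  intros Hb S0 S1 S2. pose proof (RtoC_neq_0 b Hb).
  assert (HP : RtoC (b * Pcub be0 be1 be2 M) <> 0%C).
  { rewrite RtoC_mult, Pcub_factor. repeat apply Cmult_neq_0; auto. }
  unfold ratfun, Rdiv. rewrite RtoC_mult, RtoC_inv by (intro E; apply HP; now rewrite E).
  rewrite RtoC_mult, Pcub_factor.
  replace (n2 * M ^ 2 + n1 * M + n0) with (n2 * M * M + n1 * M + n0) by ring.
  rewrite !RtoC_plus, !RtoC_mult.
  unfold residue, quadC. field. repeat split; auto.
Qed.

Variables (a1 a2 b0 b1 b2 : R) (J0 J1 J2 : C).
Hypotheses (Eq0 : dispersion_rel a1 a2 b0 b1 b2 g0 J0) (Eq1 : dispersion_rel a1 a2 b0 b1 b2 g1 J1)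
  (Eq2 : dispersion_rel a1 a2 b0 b1 b2 g2 J2).

Lemma residue_sum_h2 : b2 <> 0 ->
  residue_sum (- (a1 + a2) - be2) (a1 * a2 - be1) (- be0) b2 g0 g1 g2 J0 J1 J2 = RtoC 1.
Proof.
  intros Hb2. pose proof (RtoC_neq_0 b2 Hb2). destruct Hvieta as [H0 [H1 H2]].
  (* At a root g the numerator equals g (a1 - g) (a2 - g), so each term of the sum is
     B(g) / (b2 P'(g)) with B(g) = b0 + b1 g + b2 g^2; Lagrange interpolation gives 1. *)
  rewrite (residue_sum_eq _ _ _ _ _ _ _ _ _ _
    (RtoC b0 + RtoC b1 * g0 + RtoC b2 * g0 * g0) (RtoC b0 + RtoC b1 * g1 + RtoC b2 * g1 * g1)
    (RtoC b0 + RtoC b1 * g2 + RtoC b2 * g2 * g2))%C.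
  - field. repeat split; auto.
  - rewrite <- Eq0. unfold quadC. push_RtoC. rewrite H0, H1, H2. ring.
  - rewrite <- Eq1. unfold quadC. push_RtoC. rewrite H0, H1, H2. ring.
  - rewrite <- Eq2. unfold quadC. push_RtoC. rewrite H0, H1, H2. ring.
Qed.

Lemma residue_sum_h0 : b0 <> 0 ->
  residue_sum (- be0) (be0 * (a1 + a2)) (- be0 * a1 * a2) b0 g0 g1 g2 J0 J1 J2 = RtoC 1.
Proof.
  intros Hb0. pose proof (RtoC_neq_0 b0 Hb0). destruct Hvieta as [H0 _].
  pose proof (dispersion_rel_neq_0 _ _ _ _ _ _ _ Hb0 Eq0).
  pose proof (dispersion_rel_neq_0 _ _ _ _ _ _ _ Hb0 Eq1).
  pose proof (dispersion_rel_neq_0 _ _ _ _ _ _ _ Hb0 Eq2).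
  (* the numerator is - be0 (M - a1) (M - a2) *)
  rewrite (residue_sum_eq _ _ _ _ _ _ _ _ _ _
    (- RtoC be0 / g0 * (RtoC b0 + RtoC b1 * g0 + RtoC b2 * g0 * g0))
    (- RtoC be0 / g1 * (RtoC b0 + RtoC b1 * g1 + RtoC b2 * g1 * g1))
    (- RtoC be0 / g2 * (RtoC b0 + RtoC b1 * g2 + RtoC b2 * g2 * g2)))%C.
  - rewrite H0. field. repeat split; auto.
  - rewrite <- Eq0. unfold quadC. push_RtoC. field. auto.
  - rewrite <- Eq1. unfold quadC. push_RtoC. field. auto.
  - rewrite <- Eq2. unfold quadC. push_RtoC. field. auto.
Qed.

Lemma residue_sum_h1 : b0 <> 0 -> b1 <> 0 ->
  residue_sum (a1 * a2 - be1) (be1 * (a1 + a2) - be0 + a1 * a2 * be2) (be0 * (a1 + a2)) b1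
    g0 g1 g2 J0 J1 J2 = RtoC 1.
Proof.
  intros Hb0 Hb1. pose proof (RtoC_neq_0 b1 Hb1). destruct Hvieta as [H0 [H1 H2]].
  pose proof (dispersion_rel_neq_0 _ _ _ _ _ _ _ Hb0 Eq0).
  pose proof (dispersion_rel_neq_0 _ _ _ _ _ _ _ Hb0 Eq1).
  pose proof (dispersion_rel_neq_0 _ _ _ _ _ _ _ Hb0 Eq2).
  (* at a root g the numerator equals - (be1 g + be0) (g - a1) (g - a2) / g *)
  rewrite (residue_sum_eq _ _ _ _ _ _ _ _ _ _
    (- (g0 * RtoC be1 + RtoC be0) / (g0 * g0) * (RtoC b0 + RtoC b1 * g0 + RtoC b2 * g0 * g0))
    (- (g1 * RtoC be1 + RtoC be0) / (g1 * g1) * (RtoC b0 + RtoC b1 * g1 + RtoC b2 * g1 * g1))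
    (- (g2 * RtoC be1 + RtoC be0) / (g2 * g2) * (RtoC b0 + RtoC b1 * g2 + RtoC b2 * g2 * g2)))%C.
  - rewrite H0, H1. field. repeat split; auto.
  - rewrite <- Eq0. unfold quadC. push_RtoC. rewrite H0, H1, H2. field. auto.
  - rewrite <- Eq1. unfold quadC. push_RtoC. rewrite H0, H1, H2. field. auto.
  - rewrite <- Eq2. unfold quadC. push_RtoC. rewrite H0, H1, H2. field. auto.
Qed.

End Cubic.

(** * Integrating rho against the rational functions *)

Lemma Cmod_div_sub_le (m : R) (g w : C) : 0 < m -> inD m g ->
  exists d, 0 < d /\ forall M, 4 * m ^ 2 <= M -> Cmod (w / (RtoC M - g))%C <= Cmod w / d / M.
Proof.
  intros Hm Hg. destruct (inD_Cmod_sub_ge_linear m g Hg) as [d [Hd Hsep]].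
  exists d. split; [exact Hd |].
  intros M HM. pose proof (four_m2_pos m Hm). specialize (Hsep M HM).
  assert (HdM : 0 < d * M) by nra.
  rewrite Cmod_div by (apply Cmod_gt_0; lra).
  apply Rle_trans with (Cmod w / (d * M)).
  - unfold Rdiv. apply Rmult_le_compat_l; [apply Cmod_ge_0 |]. apply Rinv_le_contravar; lra.
  - right. field. lra.
Qed.

Section SpectralCubic.

Variables (m be0 be1 be2 : R) (g0 g1 g2 : C).
Hypotheses (Hm : 0 < m) (D0 : inD m g0) (D1 : inD m g1) (D2 : inD m g2)
  (Hvieta : vieta be0 be1 be2 g0 g1 g2).

Lemma Pcub_neq_0 (M : R) : 4 * m ^ 2 <= M -> Pcub be0 be1 be2 M <> 0.
Proof.
  intros HM E. apply (f_equal RtoC) in E. rewrite (Pcub_factor _ _ _ _ _ _ Hvieta) in E.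
  revert E. repeat apply Cmult_neq_0; now apply (inD_sub_neq_0 m).
Qed.

Hypotheses (N01 : g0 <> g1) (N02 : g0 <> g2) (N12 : g1 <> g2).

Lemma ratfun_eq_on_ray (n2 n1 n0 b M : R) : b <> 0 -> 4 * m ^ 2 <= M ->
  RtoC (ratfun n2 n1 n0 b be0 be1 be2 M) =
  (residue n2 n1 n0 b g0 g1 g2 / (RtoC M - g0) + residue n2 n1 n0 b g1 g0 g2 / (RtoC M - g1)
   + residue n2 n1 n0 b g2 g0 g1 / (RtoC M - g2))%C.
Proof.
  intros Hb HM. apply ratfun_partial_fractions; auto; now apply (inD_sub_neq_0 m).
Qed.

Lemma ratfun_bound (n2 n1 n0 b : R) : b <> 0 ->
  exists K, forall M, 4 * m ^ 2 <= M -> Rabs (ratfun n2 n1 n0 b be0 be1 be2 M) <= K / M.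
Proof.
  intros Hb.
  set (w0 := residue n2 n1 n0 b g0 g1 g2).
  set (w1 := residue n2 n1 n0 b g1 g0 g2).
  set (w2 := residue n2 n1 n0 b g2 g0 g1).
  destruct (Cmod_div_sub_le m g0 w0 Hm D0) as [d0 [Hd0 B0]].
  destruct (Cmod_div_sub_le m g1 w1 Hm D1) as [d1 [Hd1 B1]].
  destruct (Cmod_div_sub_le m g2 w2 Hm D2) as [d2 [Hd2 B2]].
  exists (Cmod w0 / d0 + Cmod w1 / d1 + Cmod w2 / d2).
  intros M HM. pose proof (four_m2_pos m Hm).
  rewrite <- Cmod_R, ratfun_eq_on_ray by assumption. fold w0 w1 w2.
  eapply Rle_trans; [apply Cmod_triangle |].
  eapply Rle_trans; [apply Rplus_le_compat_r, Cmod_triangle |].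
  specialize (B0 M HM). specialize (B1 M HM). specialize (B2 M HM).
  replace ((Cmod w0 / d0 + Cmod w1 / d1 + Cmod w2 / d2) / M)
    with (Cmod w0 / d0 / M + Cmod w1 / d1 / M + Cmod w2 / d2 / M) by (field; lra).
  lra.
Qed.

Lemma is_RInt_gen_rho_ratfun (n2 n1 n0 b v : R) : b <> 0 ->
  residue_sum n2 n1 n0 b g0 g1 g2 (J m g0) (J m g1) (J m g2) = RtoC v ->
  is_RInt_gen (fun M => rho m M * ratfun n2 n1 n0 b be0 be1 be2 M)
    (at_point (4 * m ^ 2)) (Rbar_locally p_infty) v.
Proof.
  intros Hb Hsum. pose proof (four_m2_pos m Hm). unfold residue_sum in Hsum.
  set (w0 := residue n2 n1 n0 b g0 g1 g2) in *.
  set (w1 := residue n2 n1 n0 b g1 g0 g2) in *.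
  set (w2 := residue n2 n1 n0 b g2 g0 g1) in *.
  assert (Hterm : forall w g, inD m g -> is_RInt_gen (V := C_R_NormedModule)
    (fun M => w * J_integrand m g M)%C (at_point (4 * m ^ 2)) (Rbar_locally p_infty) (w * J m g)%C).
  { intros w g Hg. exact (is_RInt_gen_linear _ (is_linear_Cmult w) _ _ (is_RInt_gen_J m g Hm Hg)). }
  assert (Hsum_int := is_RInt_gen_plus _ _ _ _ (is_RInt_gen_plus _ _ _ _
    (Hterm w0 g0 D0) (Hterm w1 g1 D1)) (Hterm w2 g2 D2)).
  change (plus (plus (w0 * J m g0) (w1 * J m g1)) (w2 * J m g2))%C
    with (w0 * J m g0 + w1 * J m g1 + w2 * J m g2)%C in Hsum_int.
  rewrite Hsum in Hsum_int.
  apply (is_RInt_gen_linear fst (is_linear_fst (U := R_NormedModule) (V := R_NormedModule)))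
    in Hsum_int.
  apply (is_RInt_gen_ext (V := R_NormedModule)) with (2 := Hsum_int).
  apply (Filter_prod _ _ _ (fun a => a = 4 * m ^ 2) (fun b => 4 * m ^ 2 < b));
    [reflexivity | exists (4 * m ^ 2); auto |].
  intros a c -> Hc M HM. simpl in HM. rewrite Rmin_left, Rmax_right in HM by lra.
  change (fst (w0 * J_integrand m g0 M + w1 * J_integrand m g1 M + w2 * J_integrand m g2 M)%C
    = rho m M * ratfun n2 n1 n0 b be0 be1 be2 M).
  rewrite <- (re_RtoC (rho m M * _)), RtoC_mult, ratfun_eq_on_ray by lra.
  unfold J_integrand, Cdiv, Re, w0, w1, w2. f_equal. ring.
Qed.

Lemma continuous_rho_ratfun (n2 n1 n0 b M : R) : b <> 0 -> 4 * m ^ 2 <= M ->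
  continuous (fun M => rho m M * ratfun n2 n1 n0 b be0 be1 be2 M) M.
Proof.
  intros Hb HM. pose proof (four_m2_pos m Hm).
  apply (continuous_mult (K := R_AbsRing)); [apply continuous_rho; lra |].
  pose proof (Pcub_neq_0 M HM) as HP. unfold ratfun, Pcub in *.
  apply (ex_derive_continuous (V := R_NormedModule)). auto_derive.
  simpl in HP. now apply Rmult_integral_contrapositive.
Qed.

Lemma fourier_conditions_ratfun (fh : R -> R) (n2 n1 n0 b : R) : b <> 0 ->
  (forall p, fh p = 2 * PI * (Rabs p * (rho m (p ^ 2 + 4 * m ^ 2) *
                         ratfun n2 n1 n0 b be0 be1 be2 (p ^ 2 + 4 * m ^ 2)))) ->
  residue_sum n2 n1 n0 b g0 g1 g2 (J m g0) (J m g1) (J m g2) = RtoC 1 ->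
  in_W22_fourier fh /\ inv_fourier_at fh 0 (RtoC 1).
Proof.
  intros Hb Hfh Hsum. pose proof (four_m2_pos m Hm).
  set (F := fun M => rho m M * ratfun n2 n1 n0 b be0 be1 be2 M).
  assert (HFc : forall M, 4 * m ^ 2 <= M -> continuous F M)
    by (intros; now apply continuous_rho_ratfun).
  split.
  - destruct (ratfun_bound n2 n1 n0 b Hb) as [K HK].
    set (A := 2 * PI * (/ (16 * PI ^ 2) * Rabs K)).
    apply (in_W22_fourier_of_decay fh ((A * (1 + / (4 * m ^ 2))) ^ 2)).
    + intros p. apply (continuous_ext (fun p => 2 * PI * (Rabs p * F (p ^ 2 + 4 * m ^ 2)))).
      { intros x. now rewrite Hfh. }
      apply (continuous_mult (K := R_AbsRing)); [apply continuous_const |].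
      now apply continuous_radial.
    + intros p. rewrite !Hfh, Rabs_Ropp. now replace ((- p) ^ 2) with (p ^ 2) by ring.
    + intros p Hp. apply W22_integrand_decay; [lra | exact Hp |].
      set (M := p ^ 2 + 4 * m ^ 2).
      assert (HM : 4 * m ^ 2 <= M) by apply four_m2_le_shifted.
      destruct (rho_bounds m M ltac:(lra)) as [Hr0 Hr1].
      specialize (HK M HM). pose proof PI_RGT_0.
      assert (HKK : K / M <= Rabs K / M)
        by (apply Rmult_le_compat_r; [apply Rlt_le, Rinv_0_lt_compat; lra | apply Rle_abs]).
      replace (A * p / M ^ 2) with (2 * PI * (p * ((/ (16 * PI ^ 2) / M) * (Rabs K / M))))
        by (unfold A; field; lra).
      rewrite Hfh, (Rabs_pos_eq p) by lra. fold M.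
      rewrite Rabs_mult, (Rabs_pos_eq (2 * PI)), Rabs_mult, (Rabs_pos_eq p), Rabs_mult,
        (Rabs_pos_eq (rho m M)) by lra.
      apply Rmult_le_compat_l; [lra |]. apply Rmult_le_compat_l; [lra |].
      apply Rmult_le_compat; auto; [apply Rabs_pos | lra].
  - apply (inv_fourier_at_0_radial fh F (4 * m ^ 2) 1 HFc Hfh).
    now apply (is_RInt_gen_rho_ratfun n2 n1 n0 b 1).
Qed.

End SpectralCubic.

(** * Reality of the beta_i and the functions h_i *)

Lemma Cconj_inj (a b : C) : Cconj a = Cconj b -> a = b.
Proof. intros E. now rewrite <- (Cconj_conj a), E, Cconj_conj. Qed.

Lemma Cconj_RtoC (a : R) : Cconj (RtoC a) = RtoC a.
Proof. unfold Cconj, RtoC; simpl. f_equal. ring. Qed.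

Lemma RtoC_Re_conj_fixed (z : C) : Cconj z = z -> RtoC (Re z) = z.
Proof.
  destruct z as [x y]. unfold Cconj, RtoC, Re; simpl. intros E. injection E as Ey.
  f_equal. lra.
Qed.

Lemma vieta_real (g0 g1 g2 : C) : g0 <> g1 -> g0 <> g2 -> g1 <> g2 ->
  (forall g, g = g0 \/ g = g1 \/ g = g2 -> Cconj g = g0 \/ Cconj g = g1 \/ Cconj g = g2) ->
  exists be0 be1 be2 : R, vieta be0 be1 be2 g0 g1 g2.
Proof.
  intros N01 N02 N12 Hconj.
  (* conjugation permutes the three roots, so it fixes their symmetric functions *)
  assert (Hsym : Cconj (g0 * g1 * g2)%C = (g0 * g1 * g2)%C /\
                 Cconj (g0 * g1 + g0 * g2 + g1 * g2)%C = (g0 * g1 + g0 * g2 + g1 * g2)%C /\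
                 Cconj (g0 + g1 + g2)%C = (g0 + g1 + g2)%C).
  { rewrite !Cplus_conj, !Cmult_conj.
    destruct (Hconj g0 (or_introl eq_refl)) as [C0 | [C0 | C0]];
    destruct (Hconj g1 (or_intror (or_introl eq_refl))) as [C1 | [C1 | C1]];
    destruct (Hconj g2 (or_intror (or_intror eq_refl))) as [C2 | [C2 | C2]];
    first
      [ rewrite C0, C1, C2; repeat split; ring
      | exfalso; first
          [ apply N01; apply Cconj_inj; congruence
          | apply N02; apply Cconj_inj; congruence
          | apply N12; apply Cconj_inj; congruence ] ]. }
  destruct Hsym as [S0 [S1 S2]].
  exists (Re (- (g0 * g1 * g2))%C), (Re (g0 * g1 + g0 * g2 + g1 * g2)%C), (Re (- (g0 + g1 + g2))%C).
  repeat split; apply RtoC_Re_conj_fixed; rewrite ?Copp_conj; congruence.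
Qed.

Definition dispersion_eq (m a1 a2 b0 b1 b2 : R) (g : C) : Prop :=
  dispersion_rel a1 a2 b0 b1 b2 g (J m g).

Lemma dispersion_eq_conj (m a1 a2 b0 b1 b2 : R) (g : C) : 0 < m -> inD m g ->
  dispersion_eq m a1 a2 b0 b1 b2 g -> dispersion_eq m a1 a2 b0 b1 b2 (Cconj g).
Proof.
  unfold dispersion_eq. intros Hm Hg E. rewrite J_conj by assumption.
  apply (f_equal Cconj) in E.
  rewrite !Cplus_conj, !Cmult_conj, !Cminus_conj, !Cconj_RtoC in E. exact E.
Qed.

Lemma h2_hat_eq (m a1 a2 b2 be0 be1 be2 p : R) :
  b2 <> 0 -> Pcub be0 be1 be2 (p ^ 2 + 4 * m ^ 2) <> 0 ->
  h2_hat m a1 a2 b2 be0 be1 be2 p =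
  2 * PI * (Rabs p * (rho m (p ^ 2 + 4 * m ^ 2) *
    ratfun (- (a1 + a2) - be2) (a1 * a2 - be1) (- be0) b2 be0 be1 be2 (p ^ 2 + 4 * m ^ 2))).
Proof.
  intros Hb HP. unfold h2_hat, rhocheck_hat, ratfun. cbv zeta. unfold Pcub in *.
  field. split; auto.
Qed.

Lemma h1_hat_eq (m a1 a2 b1 b2 be0 be1 be2 p : R) : 0 < m -> b1 <> 0 -> b2 <> 0 ->
  Pcub be0 be1 be2 (p ^ 2 + 4 * m ^ 2) <> 0 ->
  h1_hat m a1 a2 b1 b2 be0 be1 be2 p =
  2 * PI * (Rabs p * (rho m (p ^ 2 + 4 * m ^ 2) *
    ratfun (a1 * a2 - be1) (be1 * (a1 + a2) - be0 + a1 * a2 * be2) (be0 * (a1 + a2)) b1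
      be0 be1 be2 (p ^ 2 + 4 * m ^ 2))).
Proof.
  intros Hm Hb1 Hb2 HP.
  pose proof (four_m2_le_shifted m p). pose proof (four_m2_pos m Hm).
  assert (HM : p ^ 2 + 4 * m ^ 2 <> 0) by lra.
  unfold h1_hat, h2_hat, rhocheck_hat, ratfun. cbv zeta. unfold Pcub in *.
  field. repeat split; auto.
Qed.

Lemma h0_hat_eq (m a1 a2 b0 b2 be0 be1 be2 p : R) : 0 < m -> b0 <> 0 -> b2 <> 0 ->
  Pcub be0 be1 be2 (p ^ 2 + 4 * m ^ 2) <> 0 ->
  h0_hat m a1 a2 b0 b2 be0 be1 be2 p =
  2 * PI * (Rabs p * (rho m (p ^ 2 + 4 * m ^ 2) *
    ratfun (- be0) (be0 * (a1 + a2)) (- be0 * a1 * a2) b0 be0 be1 be2 (p ^ 2 + 4 * m ^ 2))).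
Proof.
  intros Hm Hb0 Hb2 HP.
  pose proof (four_m2_le_shifted m p). pose proof (four_m2_pos m Hm).
  assert (HM : p ^ 2 + 4 * m ^ 2 <> 0) by lra.
  unfold h0_hat, h2_hat, rhocheck_hat, ratfun. cbv zeta. unfold Pcub in *.
  field. repeat split; auto.
Qed.

Section Proposition.

Variables (m a1 a2 b0 b1 b2 be0 be1 be2 : R) (g0 g1 g2 : C).
Hypotheses (Hm : 0 < m) (Hb0 : b0 <> 0) (Hb1 : b1 <> 0) (Hb2 : b2 <> 0)
  (D0 : inD m g0) (D1 : inD m g1) (D2 : inD m g2)
  (N01 : g0 <> g1) (N02 : g0 <> g2) (N12 : g1 <> g2)
  (Hvieta : vieta be0 be1 be2 g0 g1 g2)
  (Eq0 : dispersion_eq m a1 a2 b0 b1 b2 g0) (Eq1 : dispersion_eq m a1 a2 b0 b1 b2 g1)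
  (Eq2 : dispersion_eq m a1 a2 b0 b1 b2 g2).

Lemma Pcub_shifted_neq_0 (p : R) : Pcub be0 be1 be2 (p ^ 2 + 4 * m ^ 2) <> 0.
Proof. apply (Pcub_neq_0 m be0 be1 be2 g0 g1 g2); auto using four_m2_le_shifted. Qed.

Lemma h0_conditions :
  in_W22_fourier (h0_hat m a1 a2 b0 b2 be0 be1 be2) /\
  inv_fourier_at (h0_hat m a1 a2 b0 b2 be0 be1 be2) 0 (RtoC 1).
Proof.
  apply (fourier_conditions_ratfun m be0 be1 be2 g0 g1 g2) with (n2 := - be0)
    (n1 := be0 * (a1 + a2)) (n0 := - be0 * a1 * a2) (b := b0); auto.
  - intros p. apply h0_hat_eq; auto using Pcub_shifted_neq_0.
  - now apply residue_sum_h0 with (be1 := be1) (be2 := be2) (b1 := b1) (b2 := b2).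
Qed.

Lemma h1_conditions :
  in_W22_fourier (h1_hat m a1 a2 b1 b2 be0 be1 be2) /\
  inv_fourier_at (h1_hat m a1 a2 b1 b2 be0 be1 be2) 0 (RtoC 1).
Proof.
  apply (fourier_conditions_ratfun m be0 be1 be2 g0 g1 g2) with (n2 := a1 * a2 - be1)
    (n1 := be1 * (a1 + a2) - be0 + a1 * a2 * be2) (n0 := be0 * (a1 + a2)) (b := b1); auto.
  - intros p. apply h1_hat_eq; auto using Pcub_shifted_neq_0.
  - now apply residue_sum_h1 with (b0 := b0) (b2 := b2).
Qed.

Lemma h2_conditions :
  in_W22_fourier (h2_hat m a1 a2 b2 be0 be1 be2) /\
  inv_fourier_at (h2_hat m a1 a2 b2 be0 be1 be2) 0 (RtoC 1).
Proof.
  apply (fourier_conditions_ratfun m be0 be1 be2 g0 g1 g2) with (n2 := - (a1 + a2) - be2)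
    (n1 := a1 * a2 - be1) (n0 := - be0) (b := b2); auto.
  - intros p. apply h2_hat_eq; auto using Pcub_shifted_neq_0.
  - now apply residue_sum_h2 with (b0 := b0) (b1 := b1).
Qed.

End Proposition.

Theorem proposition4p7 (m a1 a2 b0 b1 b2 : R) (g0 g1 g2 : C) :
  0 < m -> b0 <> 0 -> b1 <> 0 -> b2 <> 0 ->
  inD m g0 -> inD m g1 -> inD m g2 ->
  g0 <> g1 -> g0 <> g2 -> g1 <> g2 ->
  (forall g : C, inD m g ->
     (g * (RtoC a1 - g) * (RtoC a2 - g) * J m g
        = RtoC b0 + RtoC b1 * g + RtoC b2 * g * g)%C
     <-> (g = g0 \/ g = g1 \/ g = g2)) ->
  exists be0 be1 be2 : R,
    RtoC be0 = (- (g0 * g1 * g2))%C /\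
    RtoC be1 = (g0 * g1 + g0 * g2 + g1 * g2)%C /\
    RtoC be2 = (- (g0 + g1 + g2))%C /\
    (forall M : R, 4 * m ^ 2 <= M -> Pcub be0 be1 be2 M <> 0) /\
    in_W22_fourier (h0_hat m a1 a2 b0 b2 be0 be1 be2) /\
    in_W22_fourier (h1_hat m a1 a2 b1 b2 be0 be1 be2) /\
    in_W22_fourier (h2_hat m a1 a2 b2 be0 be1 be2) /\
    inv_fourier_at (h0_hat m a1 a2 b0 b2 be0 be1 be2) 0 (RtoC 1) /\
    inv_fourier_at (h1_hat m a1 a2 b1 b2 be0 be1 be2) 0 (RtoC 1) /\
    inv_fourier_at (h2_hat m a1 a2 b2 be0 be1 be2) 0 (RtoC 1).
Proof.
  intros Hm Hb0 Hb1 Hb2 D0 D1 D2 N01 N02 N12 Hsol.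
  assert (Hroot : forall g, g = g0 \/ g = g1 \/ g = g2 ->
    inD m g /\ dispersion_eq m a1 a2 b0 b1 b2 g).
  { intros g Hg. assert (Dg : inD m g) by (destruct Hg as [-> | [-> | ->]]; assumption).
    split; [exact Dg | now apply Hsol]. }
  destruct (vieta_real g0 g1 g2 N01 N02 N12) as [be0 [be1 [be2 Hvieta]]].
  { intros g Hg. destruct (Hroot g Hg) as [Dg Eg].
    apply Hsol; [now apply inD_conj | now apply dispersion_eq_conj]. }
  destruct (Hroot g0 (or_introl eq_refl)) as [_ Eq0].
  destruct (Hroot g1 (or_intror (or_introl eq_refl))) as [_ Eq1].
  destruct (Hroot g2 (or_intror (or_intror eq_refl))) as [_ Eq2].
  exists be0, be1, be2.
  pose proof Hvieta as [H0 [H1 H2]].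
  destruct (h0_conditions m a1 a2 b0 b1 b2 be0 be1 be2 g0 g1 g2) as [W0 F0]; auto.
  destruct (h1_conditions m a1 a2 b0 b1 b2 be0 be1 be2 g0 g1 g2) as [W1 F1]; auto.
  destruct (h2_conditions m a1 a2 b0 b1 b2 be0 be1 be2 g0 g1 g2) as [W2 F2]; auto.
  repeat split; auto.
  intros M HM. now apply (Pcub_neq_0 m be0 be1 be2 g0 g1 g2).
Qed.
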